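(* Let $G$ be a finite simple graph and let $\mathcal{V}$ be a maximum-cardinality collection of pairwise edge-disjoint triangles of $G$. In the lend relation, every type-$1$ triangle $\psi^1\in\mathcal{V}$ is related to at most one $\psi\in\mathcal{V}$.
   Context: Triangles are sets of three pairwise adjacent vertices, identified with their edge sets. A triangle $t\notin\mathcal{V}$ is singly-attached to $\psi\in\mathcal{V}$ if $\psi$ is the only triangle of $\mathcal{V}$ sharing an edge with $t$; the shared edge is a base-edge and the vertex of $V(t)\setminus V(\psi)$ is its anchoring vertex. For $\psi\in\mathcal{V}$, $base(\psi)$ is the set of edges of $\psi$ that are base-edges of triangles singly-attached to $\psi$; $\psi$ has type $i$ if $|base(\psi)|=i$. A triangle $t\notin\mathcal{V}$ is doubly-attached to $\psi,\psi'\in\mathcal{V}$ if these are exactly the triangles of $\mathcal{V}$ sharing an edge with $t$. For a type-$1$ triangle $\psi^1$ with exactly one singly-attached triangle, $anchor(\psi^1)$ denotes that triangle's anchoring vertex. Lend relation: $(\psi^1,\psi)$ with $\psi^1$ of type $1$ and $\psi$ of type $1$ or $3$ is in the lend relation if exactly one triangle is singly-attached to $\psi^1$ and there exist two triangles $t_1,t_2$ both doubly-attached to $\psi^1$ and $\psi$ such that $V(t_1)\cup V(t_2)=V(\psi^1)\cup\{anchor(\psi^1)\}$ and this set induces a $K_4$. *)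

(* Graph: symmetric irreflexive relation e on a finType T. *)
From mathcomp Require Import all_boot.
Set Implicit Arguments. Unset Strict Implicit. Unset Printing Implicit Defensive.

Section Defs.
Variables (T : finType) (e : rel T).

Definition triangle (t : {set T}) : bool :=
  (#|t| == 3) && [forall x in t, forall y in t, (x != y) ==> e x y].

Definition share_edge (t t' : {set T}) : bool := 1 < #|t :&: t'|.

Definition edge_disjoint_collection (V : {set {set T}}) : bool :=
  [forall t in V, triangle t] &&
  [forall t in V, forall t' in V, (t != t') ==> ~~ share_edge t t'].

Definition maximum_packing (V : {set {set T}}) : Prop :=
  edge_disjoint_collection V /\
  forall W : {set {set T}}, edge_disjoint_collection W -> #|W| <= #|V|.

Definition singly_attached (V : {set {set T}}) (t psi : {set T}) : bool :=
  [&& triangle t, t \notin V, psi \in V &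
      [forall p in V, share_edge t p == (p == psi)]].

Definition doubly_attached (V : {set {set T}}) (t psi psi' : {set T}) : bool :=
  [&& triangle t, t \notin V, psi \in V, psi' \in V, psi != psi' &
      [forall p in V, share_edge t p == ((p == psi) || (p == psi'))]].

Definition base (V : {set {set T}}) (psi : {set T}) : {set {set T}} :=
  [set f : {set T} | [&& f \subset psi, #|f| == 2 &
     [exists t : {set T}, singly_attached V t psi && (t :&: psi == f)]]].

Definition has_type (V : {set {set T}}) (psi : {set T}) (i : nat) : bool :=
  #|base V psi| == i.

Definition induces_K4 (S : {set T}) : bool :=
  (#|S| == 4) && [forall x in S, forall y in S, (x != y) ==> e x y].

(* The lend relation. anchor(psi1) is the anchoring vertex (the vertex of
   t0 \ psi1) of the unique triangle t0 singly-attached to psi1. *)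
Definition lend (V : {set {set T}}) (psi1 psi : {set T}) : Prop :=
  [/\ psi1 \in V, psi \in V, has_type V psi1 1 &
      has_type V psi 1 || has_type V psi 3] /\
  exists t0 : {set T},
    (forall t, singly_attached V t psi1 <-> t = t0) /\
    exists a : T, a \in t0 :\: psi1 /\
      exists t1 t2 : {set T},
        [/\ doubly_attached V t1 psi1 psi, doubly_attached V t2 psi1 psi,
            t1 :|: t2 = a |: psi1 & induces_K4 (a |: psi1)].

End Defs.

(* The anchor a of psi1 is determined by psi1, and any triangle doubly attached
   to psi1 and psi inside the K4 on a |: psi1 contains a (it is not psi1) together
   with a vertex of psi1.  If psi' also lends to psi1, one of its doubly-attached
   triangles t' lies in that K4 and meets psi' in an edge; as psi' meets psi1 in
   at most one vertex, this edge is {a, u} with u in psi1.  Since u lies in one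
   of the two triangles t1, t2 witnessing the lend to psi, that triangle shares
   the edge {a, u} with psi', which forces psi' = psi. *)
From mathcomp Require Import all_boot.
From mathcomp Require Import zify.
Set Implicit Arguments. Unset Strict Implicit. Unset Printing Implicit Defensive.

Section TrianglePackings.
Variables (T : finType) (e : rel T).
Implicit Types (A B t p q : {set T}) (V : {set {set T}}).

Lemma share_edge_pair A B x y :
  x \in A -> y \in A -> x \in B -> y \in B -> x != y -> share_edge A B.
Proof.
by move=> xA yA xB yB nxy; apply/card_gt1P; exists x, y; rewrite !inE xA yA xB yB.
Qed.

Lemma triangle_card t : triangle e t -> #|t| = 3.
Proof. by case/andP=> /eqP. Qed.

Lemma packing_triangle V t : edge_disjoint_collection e V -> t \in V -> triangle e t.
Proof. by case/andP=> /forall_inP + _; apply. Qed.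

Lemma packing_meet_le1 V p q : edge_disjoint_collection e V ->
  p \in V -> q \in V -> p != q -> #|p :&: q| <= 1.
Proof.
case/andP=> _ /forall_inP disjV pV qV npq.
by have /forall_inP/(_ q qV) := disjV p pV; rewrite npq /share_edge -leqNgt.
Qed.

Lemma singly_attached_anchor_uniq V t p a b :
  singly_attached e V t p -> a \in t :\: p -> b \in t :\: p -> a = b.
Proof.
case/and4P=> /triangle_card ct _ pV /forall_inP/(_ p pV); rewrite eqxx /share_edge.
move=> /eqP shared aD bD; apply: (elimT card_le1_eqP _ b a bD aD).
by move: (cardsID p t); rewrite ct; lia.
Qed.

Lemma doubly_attached_sharer V t p q r : doubly_attached e V t p q ->
  r \in V -> r != p -> share_edge t r -> r = q.
Proof.
case/and5P=> _ _ _ _ /andP[_ /forall_inP attached] rV nrp.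
by have /eqP -> := attached r rV; rewrite (negbTE nrp) => /eqP.
Qed.

Lemma doubly_attached_share_edge V t p q : doubly_attached e V t p q -> share_edge t q.
Proof.
by case/and5P=> _ _ _ qV /andP[_ /forall_inP/(_ q qV)]; rewrite eqxx orbT => /eqP.
Qed.

Lemma mem_of_subset_setU1 t p a :
  #|p| <= #|t| -> t != p -> t \subset a |: p -> a \in t.
Proof.
move=> cpt ntp /subsetP tsub; apply: contraNT ntp => atN.
rewrite eqEcard cpt andbT; apply/subsetP=> x xt.
by case/setU1P: (tsub x xt) => // xa; rewrite -xa xt in atN.
Qed.

Lemma share_edge_sub_setU1 t p q a :
  share_edge t q -> t \subset a |: p -> #|q :&: p| <= 1 ->
  a \in q /\ exists2 u, u \in p & u \in q.
Proof.
case/card_gt1P=> x [y [/setIP[xt xq] /setIP[yt yq] nxy]] /subsetP tsub qp_le1.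
have [xa | xp] := setU1P (tsub x xt); have [ya | yp] := setU1P (tsub y yt).
- by rewrite xa ya eqxx in nxy.
- by rewrite -xa; split=> //; exists y.
- by rewrite -ya; split=> //; exists x.
- have := share_edge_pair xq yq xp yp nxy.
  by rewrite /share_edge ltnNge qp_le1.
Qed.

End TrianglePackings.

Theorem lemma18 (T : finType) (e : rel T) (e_sym : symmetric e)
  (e_irr : irreflexive e) (V : {set {set T}}) (hV : maximum_packing e V)
  (psi1 : {set T}) (h1 : psi1 \in V) (htype : has_type e V psi1 1)
  (psi psi' : {set T}) :
  lend e V psi1 psi -> lend e V psi1 psi' -> psi = psi'.
Proof.
case: hV => packV _.
have c1 := triangle_card (packing_triangle packV h1).
case=> _ [t0 [single [a [a_anchor [t1 [t2 [d1 d2 t12 _]]]]]]].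
case=> _ [t0' [single' [a' [a'_anchor [t' [t2' [d' _ t'U _]]]]]]].
have t0'E : t0' = t0 by apply/single/single'.
have a'E : a' = a.
  rewrite t0'E in a'_anchor.
  exact: singly_attached_anchor_uniq (proj2 (single t0) erefl) a'_anchor a_anchor.
rewrite {}a'E in t'U.
have anp1 : a \notin psi1 by move: a_anchor; rewrite inE => /andP[].
have /and5P[_ _ _ psi'V /andP[np1 _]] := d'.
have np' : psi' != psi1 by rewrite eq_sym.
have [ap' [u up1 up']] : a \in psi' /\ exists2 u, u \in psi1 & u \in psi'.
  apply: share_edge_sub_setU1 (doubly_attached_share_edge d') _ _.
    by rewrite -t'U subsetUl.
  exact: packing_meet_le1 packV psi'V h1 np'.
have nau : a != u by apply: contraNneq anp1 => ->.
have via_witness t : doubly_attached e V t psi1 psi -> t \subset a |: psi1 ->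
    u \in t -> psi = psi'.
  move=> dt tsub ut; have /and4P[trit tV _ _] := dt.
  have at_ : a \in t.
    apply: mem_of_subset_setU1 _ _ tsub; first by rewrite c1 (triangle_card trit).
    by apply: contraNneq tV => ->.
  exact/esym/(doubly_attached_sharer dt psi'V np')/(share_edge_pair at_ ut ap' up' nau).
have : u \in t1 :|: t2 by rewrite t12 !inE up1 orbT.
rewrite inE => /orP[ut | ut].
- by apply: via_witness d1 _ ut; rewrite -t12 subsetUl.
- by apply: via_witness d2 _ ut; rewrite -t12 subsetUr.
Qed.
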